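(* Let $\mathbf{A} = [\mathbf{A}^1 \dots \mathbf{A}^S] \in \mathbb{R}^{m\times n}$ with $\mathbf{A}^s \in \mathbb{R}^{m \times n^s}$ held at site $s\in\{1,\dots,S\}$, $n = \sum_s n^s$, and let $k \ge 1$ and $I \ge 1$ be integers. Let $\mathbf{G}_0^{\mathrm{init}} \in \mathbb{R}^{n\times k}$ be an initial matrix, and let $\mathbf{G}_0^{s,\mathrm{init}}$ denote its block of rows corresponding to site $s$. Let $\mathtt{orthonormalize}$ denote a fixed orthonormalization routine for $m\times k$ matrices and let $\mathrm{GS}$ denote (centralized) Gram-Schmidt orthonormalization of the columns of a matrix. Centralized vertical subspace iteration (with orthonormalization): $\mathbf{G}_0 = \mathrm{GS}(\mathbf{G}_0^{\mathrm{init}})$; for $i = 1,\dots,I$: $\mathbf{H}_i = \mathtt{orthonormalize}(\mathbf{A}\mathbf{G}_{i-1})$ and $\mathbf{G}_i = \mathrm{GS}(\mathbf{A}^\top \mathbf{H}_i)$. Federated vertical subspace iteration (with orthonormalization): the sites start with $\mathbf{G}_0^{s,\mathrm{init}}$ and orthonormalize them jointly via federated Gram-Schmidt, obtaining $\tilde{\mathbf{G}}_0^s$; for $i=1,\dots,I$: each site computes $\tilde{\mathbf{H}}_i^s = \mathbf{A}^s \tilde{\mathbf{G}}_{i-1}^s$, the aggregator computes $\tilde{\mathbf{H}}_i = \mathtt{orthonormalize}\big(\sum_{s=1}^S \tilde{\mathbf{H}}_i^s\big)$ and sends it to all sites, each site computes $(\mathbf{A}^s)^\top \tilde{\mathbf{H}}_i$,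 and these partial matrices are orthonormalized jointly via federated Gram-Schmidt to give $\tilde{\mathbf{G}}_i^s$. Here federated Gram-Schmidt applied to row blocks $\mathbf{V}^s$ (with columns $\mathbf{v}_i^s$) of a matrix $\mathbf{V}\in\mathbb{R}^{n\times k}$ is the procedure: sites set $\mathbf{u}_1^s=\mathbf{v}_1^s$, $n_1^s = (\mathbf{u}_1^s)^\top\mathbf{u}_1^s$, the aggregator forms $n_1=\sum_s n_1^s$; for $i=2,\dots,k$ sites compute $r_{ij}^s = (\mathbf{u}_j^s)^\top\mathbf{v}_i^s/n_j$ ($j<i$), the aggregator forms $r_{ij}=\sum_s r_{ij}^s$, sites compute $\mathbf{u}_i^s = \mathbf{v}_i^s - \sum_{j<i} r_{ij}\mathbf{u}_j^s$ and $n_i^s = (\mathbf{u}_i^s)^\top\mathbf{u}_i^s$, the aggregator forms $n_i = \sum_s n_i^s$; finally each site outputs $[\mathbf{u}_1^s/\sqrt{n_1}\dots\mathbf{u}_k^s/\sqrt{n_k}]$. Assume all Gram-Schmidt orthonormalizations above are well defined (the matrices being orthonormalized have linearly independent columns). Then centralized and federated vertical subspace iteration are equivalent: for every $i \in \{0,\dots,I\}$ and every site $s$, $\tilde{\mathbf{G}}_i^s$ equals the block of rows of $\mathbf{G}_i$ corresponding to site $s$, and for every $i\in\{1,\dots,I\}$, $\tilde{\mathbf{H}}_i = \mathbf{H}_i$.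
   Context: Setting: a star-shaped federated network with $S$ client sites and one aggregator; the columns of the data matrix $\mathbf{A}$ (samples) are vertically partitioned among the sites. ''Same initialization'' means both algorithms start from the same random initial matrix (same random seeds), the federated one with its row blocks distributed to the sites. The columns of $\mathbf{H}_i$ are candidate left singular vectors and those of $\mathbf{G}_i$ candidate right singular vectors of $\mathbf{A}$. *)

From mathcomp Require Import all_boot all_order all_algebra.
Set Implicit Arguments. Unset Strict Implicit. Unset Printing Implicit Defensive.
Import Order.TTheory GRing.Theory Num.Theory.
Local Open Scope ring_scope.

Section GS.
Variable R : rcfType.

Section Central.
Variables (n k : nat).

Definition dotc (a b : 'cV[R]_n) : R := (a^T *m b) 0 0.

Definition gs_step (us : seq 'cV[R]_n) (v : 'cV[R]_n) : seq 'cV[R]_n :=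
  rcons us (v - \sum_(u <- us) (dotc u v / dotc u u) *: u).

Definition gs_us (V : 'M[R]_(n, k)) : seq 'cV[R]_n :=
  foldl gs_step [::] [seq col j V | j <- enum 'I_k].

Definition GS (V : 'M[R]_(n, k)) : 'M[R]_(n, k) :=
  \matrix_(r, j) (let u := nth 0 (gs_us V) j in u r 0 / Num.sqrt (dotc u u)).
End Central.

Section Federated.
Variables (S : nat) (ns : 'I_S -> nat) (k : nat).

(* a column vector distributed over the sites: block u s at site s *)
Definition fvec := forall s : 'I_S, 'cV[R]_(ns s).

Definition fzero : fvec := fun s => 0.

Definition fnorm2 (u : fvec) : R := \sum_(s < S) ((u s)^T *m u s) 0 0.

Definition fcoef (u v : fvec) : R :=
  \sum_(s < S) (((u s)^T *m v s) 0 0 / fnorm2 u).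

Definition fgs_step (us : seq fvec) (v : fvec) : seq fvec :=
  rcons us (fun s => v s - \sum_(u <- us) fcoef u v *: u s).

Definition fgs_us (Vs : forall s : 'I_S, 'M[R]_(ns s, k)) : seq fvec :=
  foldl fgs_step [::] [seq (fun s => col j (Vs s)) : fvec | j <- enum 'I_k].

Definition fedGS (Vs : forall s : 'I_S, 'M[R]_(ns s, k)) :
    forall s : 'I_S, 'M[R]_(ns s, k) :=
  fun s => \matrix_(r, j)
    (let u := nth fzero (fgs_us Vs) j in u s r 0 / Num.sqrt (fnorm2 u)).
End Federated.

Section Iterations.
Variables (m S : nat) (ns : 'I_S -> nat) (k : nat).
Variable As : forall s : 'I_S, 'M[R]_(m, ns s).
Variable G0init : 'M[R]_(\sum_(s < S) ns s, k).
Variable orth : 'M[R]_(m, k) -> 'M[R]_(m, k).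

Definition Aglob : 'M[R]_(m, \sum_(s < S) ns s) := \mxrow_(s < S) As s.

Fixpoint cG (i : nat) : 'M[R]_(\sum_(s < S) ns s, k) :=
  match i with
  | 0 => GS G0init
  | i'.+1 => GS (Aglob^T *m orth (Aglob *m cG i'))
  end.
Definition cH (i : nat) : 'M[R]_(m, k) := orth (Aglob *m cG i.-1).

Fixpoint fG (i : nat) : forall s : 'I_S, 'M[R]_(ns s, k) :=
  match i with
  | 0 => fedGS (fun s => @submxcol _ S ns k G0init s)
  | i'.+1 => fedGS (fun s => (As s)^T *m orth (\sum_(s' < S) As s' *m fG i' s'))
  end.
Definition fH (i : nat) : 'M[R]_(m, k) :=
  orth (\sum_(s < S) As s *m fG i.-1 s).

(* the matrix being orthonormalized at step i, centralized and federated
   (the latter stacked as the n x k matrix of its row blocks) *)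
Definition cGSinput (i : nat) : 'M[R]_(\sum_(s < S) ns s, k) :=
  match i with 0 => G0init | i'.+1 => Aglob^T *m orth (Aglob *m cG i') end.
Definition fGSinput (i : nat) : 'M[R]_(\sum_(s < S) ns s, k) :=
  match i with
  | 0 => \mxcol_(s < S) @submxcol _ S ns k G0init s
  | i'.+1 => \mxcol_(s < S) ((As s)^T *m orth (\sum_(s' < S) As s' *m fG i' s'))
  end.
End Iterations.
End GS.

(** Every quantity the federated algorithm aggregates is a sum over the
    sites of a per-site contribution, and such sums are exactly the
    inner products and products of the stacked (centralized) matrices:
    [sum_s (u^s)^T v^s = u^T v] and [sum_s A^s G^s = A G].  Hence federated
    Gram-Schmidt applied to the row blocks of [V] produces the row blocks of
    [GS V], and by induction on the iteration count the two subspace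
    iterations compute the same matrices.  The identities hold even when
    some Gram-Schmidt norm vanishes, since both algorithms then divide by the
    same zero. *)

From mathcomp Require Import all_boot all_order all_algebra.
Set Implicit Arguments. Unset Strict Implicit. Unset Printing Implicit Defensive.
Import Order.TTheory GRing.Theory Num.Theory.
Local Open Scope ring_scope.

Section FederatedGramSchmidt.
Variables (R : rcfType) (S : nat) (ns : 'I_S -> nat).

Definition fstack (u : fvec R ns) : 'cV[R]_(\sum_(s < S) ns s) := \mxcol_s u s.

Lemma fstack0 : fstack (fzero R ns) = 0.
Proof. by apply/matrixP => i j; rewrite !mxE. Qed.

Lemma fnorm2_fstack (u : fvec R ns) : fnorm2 u = dotc (fstack u) (fstack u).
Proof. by rewrite /fnorm2 /dotc /fstack tr_mxcol mul_mxrow_mxcol summxE. Qed.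

Lemma fcoef_fstack (u v : fvec R ns) :
  fcoef u v = dotc (fstack u) (fstack v) / dotc (fstack u) (fstack u).
Proof.
by rewrite /fcoef -fnorm2_fstack -mulr_suml /dotc /fstack tr_mxcol
  mul_mxrow_mxcol summxE.
Qed.

Lemma fstack_fgs_step (us : seq (fvec R ns)) (v : fvec R ns) :
  map fstack (fgs_step us v) = gs_step (map fstack us) (fstack v).
Proof.
rewrite /fgs_step /gs_step map_rcons; congr rcons.
apply/matrixP => i j; rewrite /fstack !mxE big_map !summxE.
by congr (_ - _); apply: eq_bigr => u _; rewrite !mxE fcoef_fstack.
Qed.

Lemma fstack_foldl_fgs_step (us vs : seq (fvec R ns)) :
  map fstack (foldl (@fgs_step R S ns) us vs)
  = foldl (@gs_step R _) (map fstack us) (map fstack vs).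
Proof. by elim: vs us => [|v vs IHvs] us //=; rewrite IHvs fstack_fgs_step. Qed.

Lemma fstack_Rank (u : fvec R ns) s r : fstack u (tagnat.Rank s r) 0 = u s r 0.
Proof. by have := congr1 (fun M : 'cV_(ns s) => M r 0) (mxcolK u s); rewrite mxE. Qed.

Lemma nth_map_fstack (us : seq (fvec R ns)) j :
  nth 0 (map fstack us) j = fstack (nth (fzero R ns) us j).
Proof. by elim: us j => [|u us IHus] [|j] //=; rewrite fstack0. Qed.

Variable k : nat.
Variables (Vs : forall s : 'I_S, 'M[R]_(ns s, k)) (V : 'M[R]_(\sum_(s < S) ns s, k)).
Hypothesis VsE : forall s, Vs s = submxcol V s.

Lemma fstack_fgs_us : map fstack (fgs_us Vs) = gs_us V.
Proof.
rewrite /fgs_us /gs_us fstack_foldl_fgs_step /= -map_comp; congr foldl.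
apply: eq_map => j /=; apply/matrixP => a b.
by rewrite /fstack !mxE VsE mxE tagnat.sig2K.
Qed.

Lemma fedGS_submxcol s : fedGS Vs s = submxcol (GS V) s.
Proof.
apply/matrixP => r j; rewrite /fedGS /GS !mxE -fstack_fgs_us nth_map_fstack.
by rewrite -fnorm2_fstack fstack_Rank.
Qed.

End FederatedGramSchmidt.

Section SubspaceIterations.
Variables (R : rcfType) (m S : nat) (ns : 'I_S -> nat) (k : nat).
Variable As : forall s : 'I_S, 'M[R]_(m, ns s).
Variable G0init : 'M[R]_(\sum_(s < S) ns s, k).
Variable orth : 'M[R]_(m, k) -> 'M[R]_(m, k).

Lemma sum_mul_submxcol p (X : 'M[R]_(\sum_(s < S) ns s, p)) :
  \sum_(s < S) As s *m submxcol X s = Aglob As *m X.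
Proof. by rewrite /Aglob -{2}(submxcolK X) mul_mxrow_mxcol. Qed.

Lemma submxcol_trAglob_mul p (Y : 'M[R]_(m, p)) s :
  (As s)^T *m Y = submxcol ((Aglob As)^T *m Y) s.
Proof. by rewrite -submxcol_mul /Aglob tr_mxrow mxcolK. Qed.

Lemma fG_submxcol i s : fG As G0init orth i s = submxcol (cG As G0init orth i) s.
Proof.
elim: i s => [|i IHi] s /=; first exact: fedGS_submxcol.
apply: fedGS_submxcol => s'.
by under eq_bigr do rewrite IHi; rewrite sum_mul_submxcol submxcol_trAglob_mul.
Qed.

Lemma fH_cH i : fH As G0init orth i = cH As G0init orth i.
Proof.
by rewrite /fH /cH; under eq_bigr do rewrite fG_submxcol; rewrite sum_mul_submxcol.
Qed.

End SubspaceIterations.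

Theorem mainTheorem2 (R : rcfType) (m S : nat) (ns : 'I_S -> nat) (k I : nat)
  (As : forall s : 'I_S, 'M[R]_(m, ns s))
  (G0init : 'M[R]_(\sum_(s < S) ns s, k))
  (orth : 'M[R]_(m, k) -> 'M[R]_(m, k)) :
  (1 <= k)%N -> (1 <= I)%N ->
  (* all Gram-Schmidt orthonormalizations are well defined *)
  (forall i, (i <= I)%N -> \rank (cGSinput As G0init orth i) = k) ->
  (forall i, (i <= I)%N -> \rank (fGSinput As G0init orth i) = k) ->
  (forall i, (i <= I)%N -> forall s : 'I_S,
      fG As G0init orth i s = @submxcol _ S ns k (cG As G0init orth i) s) /\
  (forall i, (1 <= i <= I)%N -> fH As G0init orth i = cH As G0init orth i).
Proof.
move=> _ _ _ _; split=> [i _ s | i _].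
- exact: fG_submxcol.
- exact: fH_cH.
Qed.
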